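(* Let $B$ be a commutative ring with identity and $A$ a subring of $B$ containing the identity. Then $A$ is a dense subring of $B$ if and only if the map $i^*:\operatorname{spec} B\to\operatorname{spec} A$, $i^*(P)=P\cap A$, is a topological embedding with dense image.
   Context: All rings are commutative with identity; subrings contain the identity. $\operatorname{spec} R$ denotes the set of prime ideals of $R$ with the Zariski topology. A subring $A$ of a ring $B$ is called a dense subring of $B$ if for every ideal $I$ of $B$ and every $b\in B$ with $b\notin \operatorname{rad}(I)$, there exists $a\in B$ with $a\notin \operatorname{rad}(I)$ such that $ab\in A$. *)

From mathcomp Require Import all_boot all_algebra.
Set Implicit Arguments. Unset Strict Implicit. Unset Printing Implicit Defensive.
Import GRing.Theory.
Local Open Scope ring_scope.

Section Defs.
Variable B : comPzRingType.

Definition is_subring (A : B -> Prop) : Prop :=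
  A 1 /\ (forall x y, A x -> A y -> A (x - y)) /\ (forall x y, A x -> A y -> A (x * y)).

Definition ideal_in (A : B -> Prop) (I : B -> Prop) : Prop :=
  (forall x, I x -> A x) /\ I 0 /\
  (forall x y, I x -> I y -> I (x + y)) /\
  (forall a x, A a -> I x -> I (a * x)).

Definition prime_ideal_in (A : B -> Prop) (P : B -> Prop) : Prop :=
  ideal_in A P /\ ~ P 1 /\
  (forall a b, A a -> A b -> P (a * b) -> P a \/ P b).

Definition fullset : B -> Prop := fun _ => True.

Definition ideal (I : B -> Prop) : Prop := ideal_in fullset I.

Definition rad (I : B -> Prop) : B -> Prop := fun x => exists n : nat, I (x ^+ n).

Definition dense_subring (A : B -> Prop) : Prop :=
  forall (I : B -> Prop) (b : B), ideal I -> ~ rad I b ->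
    exists a : B, ~ rad I a /\ A (a * b).

Definition spec_in (A : B -> Prop) : Type := {P : B -> Prop | prime_ideal_in A P}.

Definition zariski_closed (A : B -> Prop) (C : spec_in A -> Prop) : Prop :=
  exists S : B -> Prop, (forall x, S x -> A x) /\
    forall P : spec_in A, C P <-> (forall x, S x -> proj1_sig P x).

Lemma contraction_prime (A : B -> Prop) (hA : is_subring A) (P : spec_in fullset) :
  prime_ideal_in A (fun x => proj1_sig P x /\ A x).
Proof.
case: P => P [[_ [P0 [PD PM]]] [P1 Pp]] /=.
case: hA => [A1 [AB AM]].
have A0 : A 0 by rewrite -(subrr 1); apply: AB.
have AN : forall x, A x -> A (- x) by move=> x Ax; rewrite -sub0r; apply: AB.
split; [split; [|split; [|split]]|split].
- by move=> x [].
- by [].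
- move=> x y [Px Ax] [Py Ay]; split; first exact: PD.
  by rewrite -[y]opprK; apply: AB => //; apply: AN.
- by move=> a x Aa [Px Ax]; split; [apply: PM | apply: AM].
- by case.
- move=> a b Aa Ab [Pab _]; case: (Pp a b I I Pab) => H; [left|right]; by split.
Qed.

Definition contraction (A : B -> Prop) (hA : is_subring A) (P : spec_in fullset) :
  spec_in A := exist _ _ (contraction_prime hA P).

End Defs.

(* General topology, with topologies described by their closed sets. *)
Section Topo.
Variables (X Y : Type) (cX : (X -> Prop) -> Prop) (cY : (Y -> Prop) -> Prop).

Definition continuous_closed (f : X -> Y) : Prop :=
  forall D, cY D -> cX (fun x => D (f x)).

(* Topological embedding: f is injective, continuous, and X carries the
   topology induced by f (every closed set of X is the preimage of a closed
   set of Y); equivalently f is a homeomorphism onto its image. *)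
Definition top_embedding (f : X -> Y) : Prop :=
  injective f /\ continuous_closed f /\
  forall C, cX C -> exists D, cY D /\ forall x, C x <-> D (f x).

Definition dense_image (f : X -> Y) : Prop :=
  forall D, cY D -> (forall x, D (f x)) -> forall y, D y.
End Topo.

(* Density of A in B says exactly that every prime P of B and every s outside P admit
   a multiple a s in A that still lies outside P. This separates primes of B with equal
   traces on A, and it lets one recover any closed set V(S) of spec B as the preimage
   of V(S') where S' is the set of elements of A lying in every prime containing S.
   Conversely, if V(b) is such a preimage, then for a prime P not containing b some
   x in A lies outside P but in every prime containing b, so x^n = c b by Krull's
   description of the radical, and c is the multiplier required by density. Density of
   the image needs no hypothesis: an element of A lying in every prime of B is
   nilpotent, hence lies in every prime of A. *)
From Pilot Require Import Defs.
From mathcomp Require Import all_boot all_algebra.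
From mathcomp Require Import boolp classical_sets.
From mathcomp Require Import ring.
Set Implicit Arguments. Unset Strict Implicit. Unset Printing Implicit Defensive.
Import GRing.Theory.
Local Open Scope ring_scope.
Local Open Scope classical_set_scope.

Section PrimeIdeals.
Variable B : comPzRingType.
Implicit Types (A I J P : B -> Prop) (x y : B).

Lemma subring_expr A x n : is_subring A -> A x -> A (x ^+ n).
Proof.
case=> A1 [_ AM] Ax; elim: n => [|n IHn]; first by rewrite expr0.
by rewrite exprS; apply: AM.
Qed.

Lemma prime_idealM A P a x : prime_ideal_in A P -> A a -> P x -> P (a * x).
Proof. by case=> [[_ [_ [_ PM]]] _]; apply: PM. Qed.

Lemma prime_ideal_expr A P x n :
  is_subring A -> prime_ideal_in A P -> A x -> P (x ^+ n) -> P x.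
Proof.
move=> hA [_ [P1 Pp]] Ax; elim: n => [|n IHn]; first by rewrite expr0.
by rewrite exprS => /Pp [] //; apply: subring_expr.
Qed.

Lemma prime_rad P x : prime_ideal_in (@fullset B) P -> Defs.rad P x -> P x.
Proof. by move=> pP [n]; apply: prime_ideal_expr pP _. Qed.

Lemma spec_eq A (P Q : spec_in A) : (forall x, proj1_sig P x <-> proj1_sig Q x) -> P = Q.
Proof.
case: P Q => [P pP] [Q pQ] /= PQ; apply: eq_exist.
by apply: funext => x; apply: propext.
Qed.

Lemma zariski_closedV A S :
  S `<=` A -> @zariski_closed B A (fun P : spec_in A => S `<=` proj1_sig P).
Proof. by move=> SA; exists S. Qed.

Definition principal_ideal b : B -> Prop := fun y => exists c, y = c * b.

Lemma principal_idealP b : Defs.ideal (principal_ideal b).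
Proof.
split=> //; split; first by exists 0; rewrite mul0r.
split; first by move=> _ _ [c1 ->] [c2 ->]; exists (c1 + c2); rewrite mulrDl.
by move=> a _ _ [c ->]; exists (a * c); rewrite mulrA.
Qed.

Definition add_principal J c : B -> Prop := fun y => exists r z, J z /\ y = z + r * c.

Lemma add_principalP J c : Defs.ideal J -> Defs.ideal (add_principal J c).
Proof.
case=> _ [J0 [JD JM]]; split=> //; split.
  by exists 0, 0; split=> //; rewrite mul0r addr0.
split.
  move=> _ _ [r1 [z1 [Jz1 ->]]] [r2 [z2 [Jz2 ->]]].
  by exists (r1 + r2), (z1 + z2); split; [apply: JD | ring].
move=> a _ _ [r [z [Jz ->]]].
by exists (a * r), (a * z); split; [apply: JM | ring].
Qed.

Section Krull.
Variables (I : B -> Prop) (x : B).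

Definition avoiding_powers J := [/\ Defs.ideal J, I `<=` J & forall n, ~ J (x ^+ n)].

Lemma maximal_avoiding_powers : Defs.ideal I -> ~ Defs.rad I x ->
  exists J, avoiding_powers J /\ forall K, J `<` K -> ~ avoiding_powers K.
Proof.
move=> hI nrx.
have avI : avoiding_powers I by split=> // n In; apply: nrx; exists n.
(* Empty sets are admitted so that the union of the empty chain is in the family. *)
pose PP (J : set B) := (forall y, ~ J y) \/ avoiding_powers J.
have [J [PPJ maxJ]] : exists J, PP J /\ forall K, J `<` K -> ~ PP K.
  apply: Zorn_bigcup => F FPP Ftot.
  have avF X y : F X -> X y -> avoiding_powers X.
    by move=> FX Xy; case: (FPP X FX) => // /(_ y).
  have [[X0 FX0 avX0]|noav] := pselect (exists2 X, F X & avoiding_powers X); last first.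
    by left=> y [X FX Xy]; apply: noav; exists X => //; apply: avF Xy.
  right; split; last 2 first.
  - by move=> y Iy; exists X0 => //; case: avX0 => _ /(_ y Iy).
  - by move=> n [X FX Xn]; case: (avF _ _ FX Xn) => _ _ /(_ n).
  split=> //; split; first by exists X0 => //; case: avX0 => -[_ []].
  split.
    move=> y z [X1 FX1 X1y] [X2 FX2 X2z].
    have [[_ [_ [D1 _]]] _ _] := avF _ _ FX1 X1y.
    have [[_ [_ [D2 _]]] _ _] := avF _ _ FX2 X2z.
    case: (Ftot _ _ FX1 FX2) => S12.
    + by exists X2 => //; apply: D2 => //; apply: S12.
    + by exists X1 => //; apply: D1 => //; apply: S12.
  move=> a y _ [X FX Xy]; exists X => //.
  by have [[_ [_ [_ M]]] _ _] := avF _ _ FX Xy; apply: M.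
exists J; split; last by move=> K JK avK; apply: (maxJ K JK); right.
case: PPJ => // emptyJ; exfalso; apply: (maxJ I); last by right.
split; first by move=> y /emptyJ.
by move=> IJ; apply: (emptyJ 0); apply: IJ; case: hI => _ [].
Qed.

Lemma maximal_avoiding_powers_prime J : avoiding_powers J ->
  (forall K, J `<` K -> ~ avoiding_powers K) -> prime_ideal_in (@fullset B) J.
Proof.
move=> [hJ IJ Jx] maxJ; have [_ [J0 [JD JM]]] := hJ.
split=> //; split; first by move=> J1; apply: (Jx 0%N); rewrite expr0.
have meet c : ~ J c -> exists m r z, J z /\ x ^+ m = z + r * c.
  move=> nJc; apply/not_existsP => nomeet.
  apply: (maxJ (add_principal J c)).
    split; first by move=> y Jy; exists 0, y; rewrite mul0r addr0.
    by move=> sub; apply/nJc/sub; exists 1, 0; rewrite add0r mul1r.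
  split; first exact: add_principalP.
    by move=> y /IJ Jy; exists 0, y; rewrite mul0r addr0.
  by move=> m [r [z Jz]]; apply: (nomeet m); exists r, z.
move=> a b _ _ Jab.
have [Ja|/meet [m [r1 [z1 [Jz1 E1]]]]] := pselect (J a); first by left.
have [Jb|/meet [n [r2 [z2 [Jz2 E2]]]]] := pselect (J b); first by right.
exfalso; apply: (Jx (m + n)%N).
have -> : x ^+ (m + n) = x ^+ n * z1 + (r1 * a) * z2 + (r1 * r2) * (a * b).
  by rewrite exprD E1 E2; ring.
by apply: (JD); [apply: (JD)|]; apply: (JM).
Qed.

Lemma prime_avoiding : Defs.ideal I -> ~ Defs.rad I x ->
  exists P : spec_in (@fullset B), I `<=` proj1_sig P /\ ~ proj1_sig P x.
Proof.
move=> hI /(maximal_avoiding_powers hI) [J [avJ maxJ]].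
exists (exist _ J (maximal_avoiding_powers_prime avJ maxJ)).
have [_ IJ Jx] := avJ; split=> //= Jx1.
by apply: (Jx 1%N); rewrite expr1.
Qed.

Lemma rad_of_primes : Defs.ideal I ->
  (forall P : spec_in (@fullset B), I `<=` proj1_sig P -> proj1_sig P x) -> Defs.rad I x.
Proof.
move=> hI inP; apply: contrapT => /(prime_avoiding hI) [P [IP nPx]].
exact/nPx/inP.
Qed.

End Krull.

Lemma nilpotent_of_primes x : (forall P : spec_in (@fullset B), proj1_sig P x) ->
  exists n, x ^+ n = 0.
Proof.
move=> inP; have [n [c xn0]] := rad_of_primes (principal_idealP 0) (fun Q _ => inP Q).
by exists n; rewrite xn0 mulr0.
Qed.

End PrimeIdeals.

Section Contraction.
Variables (B : comPzRingType) (A : B -> Prop) (hA : is_subring A).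

Local Notation spec_B := (spec_in (@fullset B)).
Local Notation closed_B := (@zariski_closed B (@fullset B)).
Local Notation closed_A := (@zariski_closed B A).
Local Notation i_star := (contraction hA).

Definition contraction_induces_topology :=
  forall C, closed_B C -> exists D, closed_A D /\ forall P, C P <-> D (i_star P).

Lemma contraction_continuous : continuous_closed closed_B closed_A i_star.
Proof.
move=> D [S [SA DE]]; exists S; split=> // P.
rewrite (DE (i_star P)) /=; split=> PS x Sx; first by case: (PS x Sx).
by split; [apply: PS | apply: SA].
Qed.

Lemma contraction_dense_image : dense_image closed_A i_star.
Proof.
move=> D [S [SA DE]] Dimg Q; apply/DE => s Ss.
have [n sn0] : exists n, s ^+ n = 0.
  by apply: nilpotent_of_primes => P; have /DE /(_ s Ss) [] := Dimg P.
have [[_ [Q0 _]] _] := proj2_sig Q.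
by apply: (prime_ideal_expr (n := n) hA (proj2_sig Q) (SA _ Ss)); rewrite sn0.
Qed.

Lemma dense_multiple_notin_prime (P : spec_B) s : dense_subring A ->
  ~ proj1_sig P s -> exists a, A (a * s) /\ ~ proj1_sig P (a * s).
Proof.
move=> dA nPs; have pP := proj2_sig P.
have [a [nra Aas]] := dA _ s (proj1 pP) (fun rs => nPs (prime_rad pP rs)).
exists a; split=> // /(proj2 (proj2 pP) a s I I) [Pa|//].
by apply: nra; exists 1%N; rewrite expr1.
Qed.

Lemma dense_contraction_inj : dense_subring A -> injective i_star.
Proof.
move=> dA.
have sub (P Q : spec_B) y : i_star P = i_star Q -> proj1_sig P y -> proj1_sig Q y.
  move=> PQ Py; apply: contrapT => /(dense_multiple_notin_prime dA) [a [Aay nQay]].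
  have : proj1_sig (i_star P) (a * y) by split=> //; apply: prime_idealM (proj2_sig P) _ _.
  by rewrite PQ => -[].
by move=> P Q PQ; apply: spec_eq => y; split; apply: sub.
Qed.

Lemma dense_contraction_induces_topology :
  dense_subring A -> contraction_induces_topology.
Proof.
move=> dA C [S [_ CE]].
pose S' x := A x /\ forall P : spec_B, S `<=` proj1_sig P -> proj1_sig P x.
exists (fun Q : spec_in A => S' `<=` proj1_sig Q); split.
  by exists S'; split=> // x [].
move=> P; rewrite CE /=; split=> [SP x [Ax inP] | S'P s Ss]; first by split=> //; apply: inP.
apply: contrapT => /(dense_multiple_notin_prime dA) [a [Aas nPas]].
have [] // := S'P (a * s); split=> // Q SQ.
exact: prime_idealM (proj2_sig Q) _ (SQ _ Ss).
Qed.

Lemma contraction_induces_topology_dense :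
  contraction_induces_topology -> dense_subring A.
Proof.
move=> induced J b hJ nrb.
have [P [JP nPb]] := prime_avoiding hJ nrb; have pP := proj2_sig P.
have [D [[S' [S'A DE]] bD]] :=
  induced _ (@zariski_closedV B (@fullset B) [set b] (fun _ _ => Logic.I)).
have inV (Q : spec_B) : proj1_sig Q b -> D (i_star Q) by move=> Qb; apply/bD => _ ->.
have [x S'x nPx] : exists2 x, S' x & ~ proj1_sig P x.
  apply: contrapT => noX; apply: nPb; apply: (proj2 (bD P) _ b erefl); apply/DE => x S'x.
  split; last exact: S'A.
  by apply: contrapT => nPx; apply: noX; exists x.
have [n [c xnc]] : Defs.rad (principal_ideal b) x.
  apply: rad_of_primes (principal_idealP b) _ => Q bQ.
  have /inV /DE /(_ x S'x) [] // : proj1_sig Q b by apply: bQ; exists 1; rewrite mul1r.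
exists c; split; last by rewrite -xnc; apply: subring_expr => //; apply: S'A.
move=> [k /JP Pck]; apply/nPx/(prime_rad pP); exists n.
by rewrite xnc mulrC; apply: prime_idealM pP Logic.I (prime_rad pP _); exists k.
Qed.

End Contraction.

Theorem corollary4p2 (B : comPzRingType) (A : B -> Prop) (hA : is_subring A) :
  dense_subring A <->
  (top_embedding (@zariski_closed B (@fullset B)) (@zariski_closed B A) (contraction hA) /\
   dense_image (@zariski_closed B A) (contraction hA)).
Proof.
split=> [dA | [[_ [_ induced]] _]]; last exact: contraction_induces_topology_dense.
split; last exact: contraction_dense_image.
split; first exact: dense_contraction_inj.
split; first exact: contraction_continuous.
exact: dense_contraction_induces_topology.
Qed.
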